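(* Fix $\alpha>0$ and $N\ge1$. For $u\in\mathbb{R}$ define the polynomial $P_u:\mathbb{R}^N\to\mathbb{R}$ by $$P_u(v)=-\alpha\left(\frac{|v|^2}{2}-\frac{|v|^4}{4}\right)+\frac{|v|^2}{2}-u v_1,$$ where $v=(v_1,\dots,v_N)$. For every $u>0$ the polynomial $P_u$ attains its global minimum only at the point $v^*(u)=(v_1^*(u),0,\dots,0)$, where $v_1^*(u)$ is a continuous function of $u>0$, is positive for $u>0$, and satisfies $v_1^*(1)=1$. *)

From HB Require Import structures.
From mathcomp Require Import all_boot all_order all_algebra.
From mathcomp Require Import all_classical all_reals all_analysis.
Set Implicit Arguments. Unset Strict Implicit. Unset Printing Implicit Defensive.
Import Order.TTheory GRing.Theory Num.Theory.
Local Open Scope ring_scope.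

Definition sqnorm (R : realType) (N : nat) (v : 'rV[R]_N) : R :=
  \sum_(i < N) v 0 i ^+ 2.

Definition P (R : realType) (N : nat) (i1 : 'I_N) (alpha u : R) (v : 'rV[R]_N) : R :=
  - alpha * (sqnorm v / 2 - (sqnorm v) ^+ 2 / 4) + sqnorm v / 2 - u * v 0 i1.

Definition first_axis (R : realType) (N : nat) (x : R) : 'rV[R]_N :=
  \row_(j < N) (if val j == 0%N then x else 0).

From HB Require Import structures.
From mathcomp Require Import all_boot all_order all_algebra.
From mathcomp Require Import all_classical all_reals all_analysis.
From mathcomp Require Import ring lra.
Import Order.TTheory GRing.Theory Num.Theory numFieldNormedType.Exports.
Local Open Scope classical_set_scope.
Local Open Scope ring_scope.
Set Implicit Arguments. Unset Strict Implicit. Unset Printing Implicit Defensive.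

(** Since |v_1| <= |v|, with equality on the half-axis v = (|v|, 0, ..., 0), for
    u > 0 one has P_u(v) >= g(|v|), where g(r) = P_u(r, 0, ..., 0) is a quartic
    whose derivative is  q(r) - u  with  q(r) = alpha r^3 + (1 - alpha) r.
    On the positive reals where q > 0, q is strictly increasing and continuous,
    so v_1^* := q^-1 is well defined and continuous, and q(1) = 1.  For
    c = v_1^*(u) the difference g(r) - g(c) factors exactly as
    (r - c)^2 (alpha (r + c)^2 + 2 (alpha c^2 + 1 - alpha)) / 4, and the second
    factor is positive because alpha c^2 + 1 - alpha = u / c. *)

Definition cubic (R : realFieldType) (alpha x : R) := alpha * x ^+ 3 + (1 - alpha) * x.

Section CubicOrder.
Variables (R : realFieldType) (alpha : R).
Hypothesis alpha_gt0 : 0 < alpha.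

Lemma cubic1 : cubic alpha 1 = 1.
Proof. by rewrite /cubic; ring. Qed.

Lemma cubic_gt0_factor (x : R) :
  0 < x -> 0 < cubic alpha x -> 0 < alpha * x ^+ 2 + 1 - alpha.
Proof. rewrite /cubic => hx hq; nra. Qed.

Lemma cubic_ltr (x y : R) :
  0 < x -> 0 < cubic alpha x -> x < y -> cubic alpha x < cubic alpha y.
Proof.
move=> hx hq hxy; have hK := cubic_gt0_factor hx hq.
have hxy2 : 0 < alpha * (x * y + y ^+ 2).
  by apply: mulr_gt0 => //; apply: addr_gt0; [apply: mulr_gt0 | apply: exprn_gt0]; lra.
have -> : cubic alpha y = cubic alpha x
    + (y - x) * (alpha * (x ^+ 2 + x * y + y ^+ 2) + 1 - alpha) by rewrite /cubic; ring.
rewrite ltrDl; apply: mulr_gt0; lra.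
Qed.

Lemma cubic_inj (x y : R) : 0 < x -> 0 < y -> 0 < cubic alpha x ->
  cubic alpha x = cubic alpha y -> x = y.
Proof.
move=> hx hy hq e; case: (ltgtP x y) => // hxy.
  by have := cubic_ltr hx hq hxy; rewrite e ltxx.
have hqy : 0 < cubic alpha y by rewrite -e.
by have := cubic_ltr hy hqy hxy; rewrite e ltxx.
Qed.

End CubicOrder.

Section CubicInverse.
Variables (R : realType) (alpha : R).
Hypothesis alpha_gt0 : 0 < alpha.

Lemma cubic_continuous : continuous (cubic alpha).
Proof.
move=> x; apply: cvgD; apply: cvgM;
  [exact: cvg_cst | exact: exprn_continuous | exact: cvg_cst | exact: cvg_id].
Qed.

Lemma cubic_surj (u : R) : 0 < u -> exists x : R, 0 < x /\ cubic alpha x = u.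
Proof.
move=> hu; have cubic0 : cubic alpha 0 = 0 by rewrite /cubic; ring.
have u_le : u <= cubic alpha (1 + u).
  have h : 0 <= alpha * (1 + u) * (u * (2 + u)).
    by apply: mulr_ge0; [apply: mulr_ge0; [exact: ltW | lra] | apply: mulr_ge0; lra].
  have -> : cubic alpha (1 + u) = 1 + u + alpha * (1 + u) * (u * (2 + u))
    by rewrite /cubic; ring.
  lra.
have [x] : exists2 x : R, x \in `[0, 1 + u] & cubic alpha x = u.
  apply: IVT; first lra.
    exact/continuous_subspaceT/cubic_continuous.
  by rewrite cubic0 ge_min le_max u_le (ltW hu) orbT.
rewrite in_itv /= => /andP[x_ge0 _] hx; exists x; split => //.
by rewrite lt_neqAle x_ge0 andbT; apply: contraTneq hu => x0; rewrite -hx -x0 cubic0 ltxx.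
Qed.

Definition cubic_inv (u : R) : R := xget 0 [set x | 0 < x /\ cubic alpha x = u].

Lemma cubic_invP (u : R) : 0 < u -> 0 < cubic_inv u /\ cubic alpha (cubic_inv u) = u.
Proof. by move=> hu; exact: (xgetPex 0 (cubic_surj hu)). Qed.

Lemma cubic_invK (x : R) : 0 < x -> 0 < cubic alpha x -> cubic_inv (cubic alpha x) = x.
Proof.
move=> hx hq; have [hi hiq] := cubic_invP hq.
by apply: (cubic_inj alpha_gt0) => //; rewrite hiq.
Qed.

Lemma cubic_inv_continuous (u : R) : 0 < u -> {for u, continuous cubic_inv}.
Proof.
move=> hu; have [hx <-] := cubic_invP hu; set x := cubic_inv u.
suff : {near cubic alpha x, continuous cubic_inv} by move/nbhs_singleton.
apply: near_can_continuous; last by near=> y; exact: cubic_continuous.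
near=> y; apply: cubic_invK; near: y; first exact: lt_nbhsr.
by apply: (cvgr_gt _ (@cubic_continuous x)); rewrite (proj2 (cubic_invP hu)).
Unshelve. all: by end_near.
Qed.

End CubicInverse.

Section FirstAxis.
Variables (R : realType) (N : nat).
Implicit Types (v : 'rV[R]_N) (x : R).

Lemma sqnorm_bigD1 (i : 'I_N) v :
  sqnorm v = v 0 i ^+ 2 + \sum_(j < N | j != i) v 0 j ^+ 2.
Proof. by rewrite /sqnorm (bigD1 i). Qed.

Lemma sqr_coord_le_sqnorm (i : 'I_N) v : v 0 i ^+ 2 <= sqnorm v.
Proof. by rewrite (sqnorm_bigD1 i) lerDl sumr_ge0 // => j _; apply: sqr_ge0. Qed.

Lemma first_axis_head (i : 'I_N) x : val i = 0%N -> first_axis N x 0 i = x.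
Proof. by move=> i0; rewrite /first_axis mxE i0. Qed.

Lemma first_axis_tail (i j : 'I_N) x : val i = 0%N -> j != i -> first_axis N x 0 j = 0.
Proof.
move=> i0 ji; rewrite /first_axis mxE; case: eqP => // j0.
by move: ji; rewrite (_ : j = i) ?eqxx //; apply: val_inj; rewrite j0 i0.
Qed.

Lemma sqnorm_first_axis (i : 'I_N) x : val i = 0%N -> sqnorm (first_axis N x) = x ^+ 2.
Proof.
move=> i0; rewrite (sqnorm_bigD1 i) first_axis_head // big1 ?addr0 // => j ji.
by rewrite (first_axis_tail _ i0 ji) expr0n.
Qed.

Lemma eq_first_axis (i : 'I_N) v : val i = 0%N ->
  sqnorm v = v 0 i ^+ 2 -> v = first_axis N (v 0 i).
Proof.
move=> i0; rewrite (sqnorm_bigD1 i) -[RHS]addr0 => /addrI /eqP.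
rewrite psumr_eq0 => [/allP vj0|j _]; last exact: sqr_ge0.
apply/rowP => j; case: (eqVneq j i) => [->|ji]; first by rewrite first_axis_head.
rewrite (first_axis_tail _ i0 ji); apply/eqP; rewrite -sqrf_eq0.
by have := vj0 j (mem_index_enum j); rewrite ji.
Qed.

End FirstAxis.

Section RadialMinimizer.
Variables (R : realType) (alpha : R) (N : nat) (i : 'I_N).
Hypotheses (alpha_gt0 : 0 < alpha) (i0 : val i = 0%N).

Lemma P_sub_first_axis (c r : R) (v : 'rV[R]_N) : r ^+ 2 = sqnorm v ->
  P i alpha (cubic alpha c) v - P i alpha (cubic alpha c) (first_axis N c)
  = (r - c) ^+ 2 / 4 * (alpha * (r + c) ^+ 2 + 2 * (alpha * c ^+ 2 + 1 - alpha))
    + cubic alpha c * (r - v 0 i).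
Proof.
by move=> hr; rewrite /P -hr (sqnorm_first_axis _ i0) first_axis_head // /cubic; field.
Qed.

Lemma first_axis_argmin (c : R) (v : 'rV[R]_N) : 0 < c -> 0 < cubic alpha c ->
  P i alpha (cubic alpha c) (first_axis N c) <= P i alpha (cubic alpha c) v /\
  (P i alpha (cubic alpha c) v = P i alpha (cubic alpha c) (first_axis N c) ->
   v = first_axis N c).
Proof.
move=> hc hq; set u := cubic alpha c in hq *.
set r := Num.sqrt (sqnorm v); set a := v 0 i.
have hr : r ^+ 2 = sqnorm v by rewrite sqr_sqrtr // sumr_ge0 // => j _; apply: sqr_ge0.
have r_ge0 : 0 <= r by exact: sqrtr_ge0.
have a_le_r : a <= r by have := sqr_coord_le_sqnorm i v; rewrite -/a -hr; nra.
have hK := cubic_gt0_factor hc hq.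
set K := alpha * (r + c) ^+ 2 + 2 * (alpha * c ^+ 2 + 1 - alpha).
have K_gt0 : 0 < K.
  have : 0 <= alpha * (r + c) ^+ 2 by apply: mulr_ge0; [exact: ltW | exact: sqr_ge0].
  rewrite /K; lra.
have radial_ge0 : 0 <= (r - c) ^+ 2 / 4 * K.
  by apply: mulr_ge0; [apply: mulr_ge0; [exact: sqr_ge0 | lra] | lra].
have axial_ge0 : 0 <= u * (r - a) by apply: mulr_ge0; lra.
have := P_sub_first_axis c hr; rewrite -/u -/K -/a => gap.
split=> [|eqP0]; first lra.
have /eqP : (r - c) ^+ 2 / 4 * K = 0 by lra.
rewrite mulf_eq0 (gt_eqF K_gt0) orbF mulf_eq0 invr_eq0 pnatr_eq0 orbF.
rewrite sqrf_eq0 subr_eq0 => /eqP r_c.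
have /eqP : u * (r - a) = 0 by lra.
rewrite mulf_eq0 (gt_eqF hq) subr_eq0 => /eqP r_a.
by rewrite -r_c r_a; apply: (eq_first_axis i0); rewrite -/a -r_a hr.
Qed.

End RadialMinimizer.

Theorem lemma2p7 (R : realType) (alpha : R) (N : nat)
    (halpha : 0 < alpha) (hN : (0 < N)%N) :
  exists v1 : R -> R,
    {within [set u : R | 0 < u], continuous v1} /\
    (forall u : R, 0 < u -> 0 < v1 u) /\
    v1 1 = 1 /\
    (forall u : R, 0 < u ->
      (forall v : 'rV[R]_N,
         P (Ordinal hN) alpha u (first_axis N (v1 u)) <= P (Ordinal hN) alpha u v) /\
      (forall v : 'rV[R]_N,
         P (Ordinal hN) alpha u v = P (Ordinal hN) alpha u (first_axis N (v1 u)) ->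
         v = first_axis N (v1 u))).
Proof.
exists (cubic_inv alpha); split.
  by apply: continuous_in_subspaceT => u /set_mem hu; exact: cubic_inv_continuous.
split; first by move=> u /(cubic_invP halpha) [].
split; first by rewrite -{1}(cubic1 alpha) cubic_invK // cubic1.
move=> u hu; have [c_gt0 c_u] := cubic_invP halpha hu.
have c_q : 0 < cubic alpha (cubic_inv alpha u) by rewrite c_u.
have argmin v := first_axis_argmin halpha (erefl : val (Ordinal hN) = 0%N) v c_gt0 c_q.
by rewrite c_u in argmin; split=> v; have [] := argmin v.
Qed.
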